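(* Let $m\ge 3$. Call $\mathbf{x}=(x_1,\ldots,x_m)\in\mathbb{R}^m$ generic if the $\binom{m}{2}$ midpoints $x_{ij}:=(x_i+x_j)/2$, $1\le i<j\le m$, are pairwise distinct (in particular the $x_i$ are pairwise distinct). For such $\mathbf{x}$ define its ranking pattern $$\mathrm{RP}^{\mathrm{UF}}(\mathbf{x})=\{(i_1\cdots i_m)\in\mathbb{P}_m:\ |y-x_{i_1}|<|y-x_{i_2}|<\cdots<|y-x_{i_m}|\text{ for some }y\in\mathbb{R}\},$$ where $\mathbb{P}_m$ is the set of permutations $(i_1\cdots i_m)$ of $[m]=\{1,\ldots,m\}$. Let $$r(m)=\bigl|\{\mathrm{RP}^{\mathrm{UF}}(\mathbf{x}):\ \mathbf{x}\in\mathbb{R}^m\text{ generic}\}\bigr|,\qquad r_0(m)=\bigl|\{\mathrm{RP}^{\mathrm{UF}}(\mathbf{x}):\ \mathbf{x}\in\mathbb{R}^m\text{ generic},\ x_1<\cdots<x_m\}\bigr|.$$ Let $\mathcal{M}_m$ be the mid-hyperplane arrangement in $\mathbb{R}^m$ consisting of the hyperplanes $\{x_i=x_j\}$ for $1\le i<j\le m$ together with the hyperplanes $\{x_i+x_j=x_k+x_l\}$ for all $(i,j,k,l)$ with $i,j,k,l$ pairwise distinct, $1\le i<j\le m$, $i<k<l\le m$. Then $$r(m)=\frac{m!}{2}\,r_0(m)=\frac{|\mathrm{ch}(\mathcal{M}_m)|}{2},$$ where $\mathrm{ch}(\mathcal{M}_m)$ denotes the set of chambers (connected components of the complement of the union of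 the hyperplanes) of $\mathcal{M}_m$.
   Context: Generic $\mathbf{x}$ are exactly the points of $\mathbb{R}^m$ not lying on any hyperplane of $\mathcal{M}_m$. *)

From HB Require Import structures.
From mathcomp Require Import all_boot all_order all_algebra all_fingroup.
From mathcomp Require Import all_classical all_reals all_analysis.
Set Implicit Arguments. Unset Strict Implicit. Unset Printing Implicit Defensive.
Import Order.TTheory GRing.Theory Num.Theory.
Import numFieldNormedType.Exports.
Local Open Scope ring_scope.
Local Open Scope classical_set_scope.

(* Points of R^m are row vectors 'rV[R]_m; coordinates x_i = x ord0 i,
   indices are 0-based ('I_m) instead of 1-based. *)
Definition coord (R : realType) m (x : 'rV[R]_m) (i : 'I_m) : R := x ord0 i.

Definition generic (R : realType) m (x : 'rV[R]_m) : Prop :=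
  forall i j k l : 'I_m, (i < j)%N -> (k < l)%N -> (i, j) <> (k, l) ->
    (coord x i + coord x j) / 2 <> (coord x k + coord x l) / 2.

(* A permutation s : 'S_m encodes (i_1 ... i_m) with i_(k+1) = s k. *)
Definition ranking_pattern (R : realType) m (x : 'rV[R]_m) : {set 'S_m} :=
  [set s : 'S_m | `[< exists y : R, forall k l : 'I_m, (k < l)%N ->
        `|y - coord x (s k)| < `|y - coord x (s l)| >]].

Definition r (R : realType) m : nat :=
  #|[set P : {set 'S_m} | `[< exists x : 'rV[R]_m, generic x /\ ranking_pattern x = P >]]|.

Definition r0 (R : realType) m : nat :=
  #|[set P : {set 'S_m} | `[< exists x : 'rV[R]_m, generic x /\
        (forall i j : 'I_m, (i < j)%N -> coord x i < coord x j) /\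
        ranking_pattern x = P >]]|.

Definition on_mid_arrangement (R : realType) m (x : 'rV[R]_m) : Prop :=
  (exists i j : 'I_m, (i < j)%N /\ coord x i = coord x j) \/
  (exists i j k l : 'I_m,
      [/\ uniq [:: i; j; k; l], (i < j)%N, (i < k)%N & (k < l)%N] /\
      coord x i + coord x j = coord x k + coord x l).

Definition mid_complement (R : realType) m : set 'rV[R]_m :=
  [set x | ~ on_mid_arrangement x].
Arguments mid_complement R m : clear implicits.

Definition chambers (R : realType) m : set (set 'rV[R]_m) :=
  [set C | exists2 x, mid_complement R m x &
                      C = connected_component (mid_complement R m) x].
Arguments chambers R m : clear implicits.
Arguments r R m : clear implicits.
Arguments r0 R m : clear implicits.

From Pilot Require Import Defs.
From HB Require Import structures.
From mathcomp Require Import all_boot all_order all_algebra all_fingroup.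
From mathcomp Require Import all_classical all_reals all_analysis.
From mathcomp Require Import ring lra zify.
Set Implicit Arguments. Unset Strict Implicit. Unset Printing Implicit Defensive.
Import Order.TTheory GRing.Theory Num.Theory.
Import numFieldNormedType.Exports.

(* The chambers of M_m are the sign vectors of generic points: two points with the
   same sign vector are joined by a segment avoiding M_m, while on a connected subset
   of the complement no sign can change.  Whether |y - x_a| < |y - x_b| is decided by
   the order of x_a, x_b and the side of (x_a + x_b)/2 on which y lies, so a ranking
   pattern depends only on the sign vector; conversely the pattern recovers the sign
   vector up to the reflection x |-> -x, which always changes it.  Hence
   |ch(M_m)| = 2 r(m).  Composing with permutations of the coordinates, each sign
   vector is uniquely a sorted one, whence |ch(M_m)| = m! r_0(m). *)

Section RealSeparation.
Local Open Scope ring_scope.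
Variable R : realFieldType.

Lemma exists_lt_seq (B : seq R) : exists w, forall b, b \in B -> w < b.
Proof.
elim: B => [|b B [w Hw]]; first by exists 0.
exists (Num.min w (b - 1)) => c; rewrite inE => /orP[/eqP->|/Hw]; rewrite gt_min.
  by rewrite ltrBlDr ltrDl ltr01 orbT.
by move->.
Qed.

Lemma exists_between_seq (a : R) (B : seq R) : (forall b, b \in B -> a < b) ->
  exists2 w, a < w & forall b, b \in B -> w < b.
Proof.
elim: B => [|b B IH] aB; first by exists (a + 1) => //; lra.
have [|w aw wB] := IH; first by move=> c cB; apply: aB; rewrite inE cB orbT.
have ab : a < b by apply: aB; rewrite mem_head.
exists (Num.min w ((a + b) / 2)); first by rewrite lt_min aw /=; lra.
move=> c; rewrite inE => /orP[/eqP->|/wB cw]; rewrite gt_min; last by rewrite cw.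
by apply/orP; right; lra.
Qed.

Lemma exists_separating (A B : seq R) : (forall a b, a \in A -> b \in B -> a < b) ->
  exists w, (forall a, a \in A -> a < w) /\ (forall b, b \in B -> w < b).
Proof.
elim: A => [|a A IH] AB; first by have [w Hw] := exists_lt_seq B; exists w.
have [|w [Aw Bw]] := IH; first by move=> u v uA; apply: AB; rewrite inE uA orbT.
have [w' aw' Bw'] := exists_between_seq (B := B) (AB a ^~ (mem_head a A)).
exists (Num.max w w'); split=> [c|b bB]; last by rewrite gt_max Bw ?Bw'.
by rewrite inE lt_max => /orP[/eqP->|/Aw->]; rewrite ?aw' ?orbT.
Qed.

Lemma dist_ltr_mid (y a b : R) : a < b -> (`|y - a| < `|y - b|) = (2 * y < a + b).
Proof.
move=> ab; have [ya|ya] := lerP a y; have [yb|yb] := lerP b y;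
  rewrite ?(ger0_norm (y - a)) ?(ger0_norm (y - b)) ?(ltr0_norm (y - a))
    ?(ltr0_norm (y - b)) ?subr_ge0 ?subr_lt0 //; apply/idP/idP; lra.
Qed.

Lemma dist_gtr_mid (y a b : R) : b < a -> (`|y - a| < `|y - b|) = (a + b < 2 * y).
Proof.
move=> ba; have [ya|ya] := lerP a y; have [yb|yb] := lerP b y;
  rewrite ?(ger0_norm (y - a)) ?(ger0_norm (y - b)) ?(ltr0_norm (y - a))
    ?(ltr0_norm (y - b)) ?subr_ge0 ?subr_lt0 //; apply/idP/idP; lra.
Qed.

Lemma dist_lt_swap (y1 y2 a b : R) : `|y1 - a| < `|y1 - b| ->
  `|y2 - b| < `|y2 - a| -> y1 < y2 -> a < b.
Proof.
move=> lt1 lt2 lt12; case: (ltrgtP a b) => // [lt_ba|eq_ab]; last by rewrite eq_ab ltxx in lt1.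
by rewrite dist_gtr_mid // in lt1; rewrite dist_ltr_mid // in lt2; lra.
Qed.

Lemma convex_comb_gt0 (t u v : R) : 0 <= t <= 1 -> 0 < u -> 0 < v ->
  0 < (1 - t) * u + t * v.
Proof. by move=> /andP[t0 t1] u0 v0; nra. Qed.

End RealSeparation.

Section SortingPermutation.
Local Open Scope ring_scope.
Variables (R : realDomainType) (m : nat).

Lemma perm_sorted_ltE (f : 'I_m -> R) (s : 'S_m) :
  (forall k l : 'I_m, (k < l)%N -> f (s k) < f (s l)) ->
  forall a b, (f a < f b) = ((s^-1)%g a < (s^-1)%g b)%N.
Proof.
move=> sorted_f a b; apply/idP/idP => [lt_ab|]; last by move/sorted_f; rewrite !permKV.
rewrite ltnNge leq_eqVlt; apply/negP => /orP[/eqP/val_inj/perm_inj eq_ba|lt_ba].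
  by move: lt_ab; rewrite eq_ba ltxx.
by have := sorted_f _ _ lt_ba; rewrite !permKV => /(lt_trans lt_ab); rewrite ltxx.
Qed.

Lemma exists_sorting_perm (f : 'I_m -> R) : injective f ->
  exists s : 'S_m, forall k l : 'I_m, (k < l)%N -> f (s k) < f (s l).
Proof.
move=> f_inj; pose rank i := #|[pred j | f j < f i]|.
have rank_lt i : (rank i < m)%N.
  rewrite -[m]card_ord -(cardC [pred j | f j < f i]) -addn1 leq_add2l.
  by apply/card_gt0P; exists i; rewrite !inE ltxx.
have rank_mono i j : f i < f j -> (rank i < rank j)%N.
  move=> lt_ij; apply: proper_card; apply/properP; split.
    by apply/fintype.subsetP => k; rewrite !inE => /lt_trans; apply.
  by exists i; rewrite !inE ?lt_ij ?ltxx.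
have rank_inj : injective (fun i => Ordinal (rank_lt i)).
  move=> i j /(congr1 val) /= eq_ij; apply/eqP; apply: contraT => ne_ij.
  have : f i != f j by rewrite (inj_eq f_inj).
  by rewrite neq_lt => /orP[] /rank_mono; rewrite eq_ij ltnn.
exists (perm rank_inj)^-1%g => k l lt_kl.
have rankK n : rank ((perm rank_inj)^-1%g n) = n.
  by rewrite -[in RHS](permKV (perm rank_inj) n) permE.
case: ltrgtP => // [/rank_mono|/f_inj eq_kl]; first by rewrite !rankK ltnNge ltnW.
by move: lt_kl; rewrite -[k in (k < _)%N]rankK eq_kl rankK ltnn.
Qed.

Lemma ltn_perm_le (s t : 'S_m) : (forall a b, (s a < s b)%N = (t a < t b)%N) ->
  forall j, (s j <= t j)%N.
Proof.
move=> st j; pose u i := t ((s^-1)%g i).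
have u_incr (i k : 'I_m) : (i < k)%N -> (u i < u k)%N by rewrite /u -st !permKV.
suff u_ge n (lt_nm : (n < m)%N) : (n <= u (Ordinal lt_nm))%N.
  by have := u_ge _ (ltn_ord (s j)); rewrite /u (_ : Ordinal _ = s j) ?permK //; apply: val_inj.
elim: n lt_nm => // n IH lt_nm.
have lt_n := ltnW lt_nm.
by have := u_incr (Ordinal lt_n) (Ordinal lt_nm) (ltnSn n); have := IH lt_n; lia.
Qed.

Lemma perm_ltn_inj (s t : 'S_m) : (forall a b, (s a < s b)%N = (t a < t b)%N) -> s = t.
Proof.
move=> st; apply/permP => j; apply/val_inj/eqP.
by rewrite eqn_leq ltn_perm_le //= ltn_perm_le.
Qed.

End SortingPermutation.

Section MidArrangement.
Local Open Scope ring_scope.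
Variables (R : realType) (m : nat).
Hypothesis m_ge3 : (3 <= m)%N.
Implicit Types x : 'rV[R]_m.
Local Notation coord := Defs.coord.

Definition distinct_sums x := forall a b c d : 'I_m, a != b -> c != d ->
  (a, b) != (c, d) -> (a, b) != (d, c) -> coord x a + coord x b != coord x c + coord x d.

Lemma exists_ord_neq2 (a b : 'I_m) : exists c : 'I_m, (c != a) && (c != b).
Proof.
have : (0 < #|~: [set a; b]|)%N.
  have := cardsC [set a; b]; rewrite cards2 (card_ord m).
  by case: (a != b) => /=; move: m_ge3; lia.
by case/card_gt0P => c; rewrite !inE negb_or; exists c.
Qed.

(* Needs a third index: x_a = x_b forces x_a + x_c = x_b + x_c. *)
Lemma distinct_sums_inj x : distinct_sums x -> injective (coord x).
Proof.
move=> dx a b eq_ab; apply/eqP; apply: contraT => ne_ab.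
have [c /andP[ne_ca ne_cb]] := exists_ord_neq2 a b.
have : coord x a + coord x c != coord x b + coord x c.
  apply: dx; rewrite ?xpair_eqE ?negb_and 1?ne_ab // eq_sym //.
  by rewrite ne_ca.
by move/eqP => ne; exfalso; apply: ne; congr (_ + _).
Qed.

Lemma generic_distinct_sums x : generic x <-> distinct_sums x.
Proof.
split=> [gx|dx].
  have lt_sums (a b c d : 'I_m) : (a < b)%N -> (c < d)%N -> (a, b) != (c, d) ->
      coord x a + coord x b != coord x c + coord x d.
    move=> ab cd /eqP ne; apply/eqP => E; apply: (gx a b c d ab cd ne); by rewrite E.
  move=> a b c d; rewrite !neq_ltn => /orP[ab|ba] /orP[cd|dc] n1 n2.
  - exact: lt_sums.
  - by rewrite [coord x c + _]addrC; apply: lt_sums.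
  - rewrite [coord x a + _]addrC; apply: lt_sums => //.
    by apply: contra n2; rewrite !xpair_eqE andbC.
  - rewrite [coord x a + _]addrC [coord x c + _]addrC; apply: lt_sums => //.
    by apply: contra n1; rewrite !xpair_eqE andbC.
move=> i j k l ij kl ne E.
have /eqP[] : coord x i + coord x j != coord x k + coord x l.
  apply: dx; rewrite ?neq_ltn ?ij ?kl //; first exact/eqP.
  rewrite xpair_eqE; apply/negP => /andP[/eqP il /eqP jk].
  by move: ij kl; rewrite il jk => /ltn_trans lt /lt; rewrite ltnn.
by rewrite (mulIf _ E) // invr_eq0 pnatr_eq0.
Qed.

Lemma on_mid_arrangement_coord x (a b : 'I_m) : a != b -> coord x a = coord x b ->
  on_mid_arrangement x.
Proof.
move=> ne_ab eq_ab; left; case: (ltngtP a b) => [lt_ab|lt_ba|/val_inj eq_ab'].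
- by exists a, b.
- by exists b, a.
- by rewrite eq_ab' eqxx in ne_ab.
Qed.

Lemma on_mid_arrangement_sum x (a b c d : 'I_m) : uniq [:: a; b; c; d] ->
  coord x a + coord x b = coord x c + coord x d -> on_mid_arrangement x.
Proof.
wlog lt_ab : a b / (a < b)%N.
  move=> W U E; case: (ltngtP a b) => [lt_ab|lt_ba|/val_inj eq_ab]; first exact: W lt_ab U E.
  - apply: (W b a lt_ba); last by rewrite addrC.
    by rewrite -(perm_uniq (introT permPl (perm_catCA [:: a] [:: b] [:: c; d]))).
  - by move: U; rewrite eq_ab /= mem_head.
wlog lt_cd : c d / (c < d)%N.
  move=> W U E; case: (ltngtP c d) => [lt_cd|lt_dc|/val_inj eq_cd]; first exact: W lt_cd U E.
  - apply: (W d c lt_dc); last by rewrite [_ x d + _]addrC.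
    have swap_cd : perm_eq [:: a; b; c; d] [:: a; b; d; c].
      by rewrite !perm_cons; apply/permPl; exact: (perm_catC [:: c] [:: d]).
    by rewrite -(perm_uniq swap_cd).
  - by move: U; rewrite eq_cd /= !inE eqxx !andbF.
wlog lt_ac : a b c d lt_ab lt_cd / (a < c)%N.
  move=> W U E; case: (ltngtP a c) => [lt_ac|lt_ca|/val_inj eq_ac]; first exact: W lt_ac U E.
  - apply: (W c d a b) => //.
    by rewrite -(perm_uniq (introT permPl (perm_catC [:: a; b] [:: c; d]))).
  - by move: U; rewrite eq_ac /= !inE eqxx !orbT.
by move=> U E; right; exists a, b, c, d.
Qed.

Lemma mid_complementP x : mid_complement R m x <-> distinct_sums x.
Proof.
split=> [off_x|dx].
  move=> a b c d ne_ab ne_cd n1 n2; apply/eqP => E; apply: off_x.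
  case: (eqVneq a c) => [eq_ac|ne_ac].
    apply: (@on_mid_arrangement_coord _ b d); last by apply: (addrI (coord x a)); rewrite {2}eq_ac.
    by apply: contra n1 => /eqP->; rewrite eq_ac.
  case: (eqVneq a d) => [eq_ad|ne_ad].
    apply: (@on_mid_arrangement_coord _ b c); last first.
      by apply: (addrI (coord x a)); rewrite E addrC eq_ad.
    by apply: contra n2 => /eqP->; rewrite eq_ad.
  case: (eqVneq b c) => [eq_bc|ne_bc].
    apply: (@on_mid_arrangement_coord _ a d); last first.
      by apply: (addIr (coord x b)); rewrite E addrC eq_bc.
    by apply: contra n2 => /eqP->; rewrite eq_bc.
  case: (eqVneq b d) => [eq_bd|ne_bd].
    apply: (@on_mid_arrangement_coord _ a c); last by apply: (addIr (coord x b)); rewrite {2}eq_bd.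
    by apply: contra n1 => /eqP->; rewrite eq_bd.
  apply: (@on_mid_arrangement_sum _ a b c d) => //.
  by rewrite /= !inE !negb_or ne_ab ne_ac ne_ad ne_bc ne_bd ne_cd.
case=> [[i [j [lt_ij E]]]|[i [j [k [l [[U lt_ij lt_ik lt_kl] E]]]]]].
  by move: lt_ij; rewrite (distinct_sums_inj dx E) ltnn.
move: U; rewrite /= !inE !negb_or => /andP[/and3P[ne_ij ne_ik ne_il]].
move=> /andP[/andP[_ _] /andP[ne_kl _]].
have := dx i j k l ne_ij ne_kl; rewrite !xpair_eqE !negb_and ne_ik ne_il.
by move=> /(_ isT isT); rewrite E eqxx.
Qed.

Definition pair_sum x (p : 'I_m * 'I_m) := coord x p.1 + coord x p.2.

Definition same_kind (p q : 'I_m * 'I_m) := (p.1 == p.2) == (q.1 == q.2).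

Local Notation sign_type := {ffun ('I_m * 'I_m) * ('I_m * 'I_m) -> bool}.

(* The side of each hyperplane of M_m on which x lies: diagonal pairs (a, a),
   (b, b) compare x_a with x_b, off-diagonal ones compare x_a + x_b with x_c + x_d. *)
Definition sign_vector x : sign_type :=
  [ffun pq => same_kind pq.1 pq.2 && (pair_sum x pq.1 < pair_sum x pq.2)].

Lemma sign_vectorP x x' : sign_vector x = sign_vector x' <->
  forall p q, same_kind p q -> (pair_sum x p < pair_sum x q) = (pair_sum x' p < pair_sum x' q).
Proof.
split=> [E p q kind|E]; last first.
  by apply/ffunP => -[p q]; rewrite !ffunE /=; case kind: (same_kind p q); rewrite //= E.
by have := congr1 (fun f : sign_type => f (p, q)) E; rewrite !ffunE /= kind.
Qed.

Lemma same_kind_sym p q : same_kind p q = same_kind q p.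
Proof. exact: eq_sym. Qed.

Lemma same_kind_diag (a b : 'I_m) : same_kind (a, a) (b, b).
Proof. by rewrite /same_kind /= !eqxx. Qed.

Lemma pair_sum_diag_lt x (a b : 'I_m) :
  (pair_sum x (a, a) < pair_sum x (b, b)) = (coord x a < coord x b).
Proof. by rewrite /pair_sum /=; apply/idP/idP; lra. Qed.

Lemma sign_vector_diag x (a b : 'I_m) :
  sign_vector x ((a, a), (b, b)) = (coord x a < coord x b).
Proof. by rewrite ffunE same_kind_diag pair_sum_diag_lt. Qed.

Lemma pair_sum_neq x p q : distinct_sums x -> same_kind p q -> p != q ->
  p != (q.2, q.1) -> pair_sum x p != pair_sum x q.
Proof.
case: p q => a b [c d] dx; rewrite /same_kind /pair_sum /= => kind n1 n2.
case: (eqVneq a b) kind n1 n2 => [<-|ne_ab] /=.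
  case: (eqVneq c d) => [<-|//] _ ne_ac _; apply/eqP => E.
  have /(distinct_sums_inj dx) eq_ac : coord x a = coord x c by lra.
  by rewrite eq_ac eqxx in ne_ac.
by case: (eqVneq c d) => [//|ne_cd] _; apply: dx.
Qed.

Lemma coordN x i : coord (- x) i = - coord x i.
Proof. by rewrite /Defs.coord mxE. Qed.

Lemma pair_sumN x p : pair_sum (- x) p = - pair_sum x p.
Proof. by rewrite /pair_sum !coordN opprD. Qed.

Lemma distinct_sumsN x : distinct_sums x -> distinct_sums (- x).
Proof. by move=> dx a b c d n1 n2 n3 n4; rewrite !coordN -!opprD (inj_eq oppr_inj) dx. Qed.

Definition flip_signs (f : sign_type) : sign_type := [ffun pq => f (pq.2, pq.1)].

Lemma flip_signsK : involutive flip_signs.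
Proof. by move=> f; apply/ffunP => -[p q]; rewrite !ffunE. Qed.

Lemma sign_vectorN x : sign_vector (- x) = flip_signs (sign_vector x).
Proof.
apply/ffunP => -[p q]; rewrite !ffunE /= !pair_sumN ltrN2.
by rewrite same_kind_sym.
Qed.

Section Chambers.
Local Open Scope classical_set_scope.

Lemma coord_segment x x' (t : R) i :
  coord (x + t *: (x' - x)) i = coord x i + t * (coord x' i - coord x i).
Proof. by rewrite /Defs.coord !mxE. Qed.

(* Along the segment each difference x_c + x_d - x_a - x_b is a convex combination
   of its values at the ends, which are nonzero and of the same sign. *)
Lemma segment_distinct_sums x x' (t : R) : distinct_sums x ->
  sign_vector x = sign_vector x' -> 0 <= t <= 1 -> distinct_sums (x + t *: (x' - x)).
Proof.
move=> dx /sign_vectorP E t01 a b c d ne_ab ne_cd n1 n2; rewrite !coord_segment.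
have kind : same_kind (a, b) (c, d) by rewrite /same_kind /= (negbTE ne_ab) (negbTE ne_cd).
have := E _ _ kind; have := E _ _ (etrans (same_kind_sym _ _) kind).
have := dx a b c d ne_ab ne_cd n1 n2; rewrite /pair_sum /=.
move=> ne_uv gt_same lt_same; apply/eqP => eq_seg.
case: ltrgtP ne_uv lt_same gt_same => // lt_uv _ => [/esym/idP lt_uv' _|_ /esym/idP lt_uv'];
  rewrite -subr_gt0 in lt_uv; rewrite -subr_gt0 in lt_uv';
  by have := convex_comb_gt0 t01 lt_uv lt_uv'; lra.
Qed.

Lemma sign_vector_connected x x' : distinct_sums x ->
  sign_vector x = sign_vector x' -> connected_component (mid_complement R m) x x'.
Proof.
move=> dx E; pose f (t : R) := x + t *: (x' - x).
have f_cont : continuous f.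
  by move=> t; apply: cvgD; [exact: cst_continuous | exact: scalel_continuous].
exists (f @` `[0, 1]); last by exists 1; rewrite /= ?in_itv /= ?lexx ?ler01 // /f scale1r addrC subrK.
split.
- by exists 0; rewrite /= ?in_itv /= ?lexx ?ler01 // /f scale0r addr0.
- move=> z [t]; rewrite /= in_itv /= => t01 <-.
  exact/mid_complementP/segment_distinct_sums.
- apply: connected_continuous_connected; first exact: segment_connected.
  exact: continuous_subspaceT.
Qed.

Lemma pair_sum_continuous p : continuous (fun z : 'rV[R]_m => pair_sum z p).
Proof.
have coord_cont i : continuous (fun z : 'rV[R]_m => coord z i).
  by move=> z; exact: coord_continuous.
by move=> z; exact: (continuousD (coord_cont p.1 z) (coord_cont p.2 z)).
Qed.

(* Intermediate value theorem for the continuous map z |-> pair_sum z q - pair_sum z p,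
   which does not vanish on the complement. *)
Lemma connected_pair_sum_lt (C : set 'rV[R]_m) p q u v : connected C ->
  C `<=` mid_complement R m -> same_kind p q -> C u -> C v ->
  pair_sum u p < pair_sum u q -> pair_sum v p < pair_sum v q.
Proof.
move=> C_conn C_off kind Cu Cv lt_u.
have [/orP[/eqP eq_pq|/eqP eq_pq]|] := boolP ((p == q) || (p == (q.2, q.1))).
- by rewrite eq_pq ltxx in lt_u.
- by rewrite eq_pq /pair_sum /= addrC ltxx in lt_u.
rewrite negb_or => /andP[ne_pq ne_pq'].
pose g z := pair_sum z q - pair_sum z p.
have g_cont : continuous g.
  by rewrite /g => z; exact: continuousB (@pair_sum_continuous q z) (@pair_sum_continuous p z).
have g_interval := (connected_intervalP _).1
  (connected_continuous_connected C_conn (continuous_subspaceT g_cont)).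
rewrite -subr_gt0; apply: contraT; rewrite -leNgt => le_v.
have [w Cw gw0] : (g @` C) 0.
  apply: (g_interval (g v) (g u)); [by exists v | by exists u |].
  by apply/andP; split; rewrite // subr_ge0 ltW.
have /mid_complementP dw := C_off w Cw.
by have := pair_sum_neq dw kind ne_pq ne_pq'; rewrite eq_sym -subr_eq0 -/(g w) gw0 eqxx.
Qed.

Lemma connected_sign_vector x x' : distinct_sums x ->
  connected_component (mid_complement R m) x x' -> sign_vector x = sign_vector x'.
Proof.
move=> dx xx'; set C := connected_component (mid_complement R m) x.
have C_conn : connected C by apply: component_connected.
have C_off : C `<=` mid_complement R m by apply: connected_component_sub.
have Cx : C x by apply/connected_component_refl/mid_complementP.
apply/sign_vectorP => p q kind.
by apply/idP/idP; apply: connected_pair_sum_lt C_conn C_off kind _ _.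
Qed.

End Chambers.

Lemma ranking_patternP x (s : 'S_m) : reflect (exists y : R, forall k l : 'I_m,
  (k < l)%N -> `|y - coord x (s k)| < `|y - coord x (s l)|) (s \in ranking_pattern x).
Proof. by rewrite inE; apply: asboolP. Qed.

Lemma ranking_patternN x : ranking_pattern (- x) = ranking_pattern x.
Proof.
have distN (y c : R) : `|- y - c| = `|y - - c| by rewrite opprK -opprD normrN.
apply/setP => s; apply/ranking_patternP/ranking_patternP => -[y sorted_y];
  by exists (- y) => k l lt_kl; have := sorted_y k l lt_kl; rewrite !coordN !distN ?opprK.
Qed.

Definition off_diagonal : seq ('I_m * 'I_m) :=
  [seq p <- index_enum (prod 'I_m 'I_m) | p.1 != p.2].

Lemma mem_off_diagonal p : (p \in off_diagonal) = (p.1 != p.2).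
Proof. by rewrite mem_filter mem_index_enum andbT. Qed.

Lemma sign_vector_same_side x x' (y : R) : sign_vector x = sign_vector x' ->
  exists y' : R, forall a b, a != b ->
    (pair_sum x (a, b) < 2 * y -> pair_sum x' (a, b) < 2 * y') /\
    (2 * y < pair_sum x (a, b) -> 2 * y' < pair_sum x' (a, b)).
Proof.
move=> /sign_vectorP E.
pose below := [seq pair_sum x' p | p <- off_diagonal & pair_sum x p < 2 * y].
pose above := [seq pair_sum x' p | p <- off_diagonal & 2 * y < pair_sum x p].
have [|w [below_w above_w]] := @exists_separating _ below above.
  move=> _ _ /mapP[p + ->] /mapP[q + ->].
  rewrite mem_filter mem_off_diagonal => /andP[lt_p ne_p].
  rewrite mem_filter mem_off_diagonal => /andP[lt_q ne_q].
  have kind : same_kind p q by rewrite /same_kind (negbTE ne_p) (negbTE ne_q).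
  by rewrite -E // (lt_trans lt_p lt_q).
exists (w / 2) => a b ne_ab; have -> : 2 * (w / 2) = w by lra.
split=> lt_ab.
  by apply: below_w; apply: map_f; rewrite mem_filter mem_off_diagonal lt_ab.
by apply: above_w; apply: map_f; rewrite mem_filter mem_off_diagonal lt_ab.
Qed.

Lemma sign_vector_pattern_sub x x' : distinct_sums x ->
  sign_vector x = sign_vector x' -> {subset ranking_pattern x <= ranking_pattern x'}.
Proof.
move=> dx E s /ranking_patternP[y sorted_y].
have [y' same_side] := sign_vector_same_side y E.
have coord_lt a b : (coord x a < coord x b) = (coord x' a < coord x' b).
  by rewrite -!sign_vector_diag E.
apply/ranking_patternP; exists y' => k l lt_kl.
have := sorted_y k l lt_kl; set a := s k; set b := s l.
have ne_ab : a != b by rewrite (inj_eq perm_inj) -val_eqE /= neq_ltn lt_kl.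
have [side_lt side_gt] := same_side a b ne_ab; rewrite /pair_sum /= in side_lt side_gt.
case: (ltrgtP (coord x a) (coord x b)) => [lt_ab|lt_ba|/(distinct_sums_inj dx)/eqP].
- have lt_ab' : coord x' a < coord x' b by rewrite -coord_lt.
  by rewrite !dist_ltr_mid // => /side_gt.
- have lt_ba' : coord x' b < coord x' a by rewrite -coord_lt.
  by rewrite !dist_gtr_mid // => /side_lt.
- by rewrite (negbTE ne_ab).
Qed.

Lemma sign_vector_pattern x x' : distinct_sums x -> distinct_sums x' ->
  sign_vector x = sign_vector x' -> ranking_pattern x = ranking_pattern x'.
Proof.
move=> dx dx' E; apply/setP => s; apply/idP/idP.
  exact: (sign_vector_pattern_sub dx E).
exact: (sign_vector_pattern_sub dx' (esym E)).
Qed.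

Definition sorted_by x (s : 'S_m) :=
  forall k l : 'I_m, (k < l)%N -> coord x (s k) < coord x (s l).

Lemma sorted_in_pattern x (s : 'S_m) : sorted_by x s -> s \in ranking_pattern x.
Proof.
move=> sorted_x; have [y y_below] := exists_lt_seq [seq coord x i | i <- enum 'I_m].
have below i : y < coord x i by apply: y_below; apply: map_f; rewrite mem_enum.
apply/ranking_patternP; exists y => k l lt_kl.
have := sorted_x k l lt_kl; have := below (s k); have := below (s l) => h1 h2 h3.
by rewrite !ltr0_norm ?subr_lt0 //; lra.
Qed.

Lemma rev_ord_ltn (k l : 'I_m) : (k < l)%N -> (rev_ord l < rev_ord k)%N.
Proof. by move=> lt_kl; have := ltn_ord l; rewrite /=; lia. Qed.

Definition rev_perm : 'S_m := perm (@rev_ord_inj m).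

Lemma rev_permE (s : 'S_m) k : (rev_perm * s)%g k = s (rev_ord k).
Proof. by rewrite permM permE. Qed.

Lemma rev_sorted_in_pattern x (s : 'S_m) : sorted_by x s ->
  (rev_perm * s)%g \in ranking_pattern x.
Proof.
move=> sorted_x; rewrite -ranking_patternN; apply: sorted_in_pattern => k l lt_kl.
by rewrite !rev_permE !coordN ltrN2; apply: sorted_x; apply: rev_ord_ltn.
Qed.

(* The two witnesses y1 <> y2 of s and of its reversal see every pair
   (s k, s l) in opposite orders, which forces x to be monotone along s. *)
Lemma pattern_sorted_or_rev x (s : 'S_m) : s \in ranking_pattern x ->
  (rev_perm * s)%g \in ranking_pattern x -> sorted_by x s \/ sorted_by (- x) s.
Proof.
move=> /ranking_patternP[y1 sorted1] /ranking_patternP[y2 sorted2].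
have {}sorted2 (k l : 'I_m) : (k < l)%N -> `|y2 - coord x (s l)| < `|y2 - coord x (s k)|.
  by move=> lt_kl; have := sorted2 _ _ (rev_ord_ltn lt_kl); rewrite !rev_permE !rev_ordK.
case: (ltrgtP y1 y2) => [lt12|lt21|eq12]; [left|right|left] => k l lt_kl.
- exact: dist_lt_swap (sorted1 _ _ lt_kl) (sorted2 _ _ lt_kl) lt12.
- by rewrite !coordN ltrN2; apply: dist_lt_swap (sorted2 _ _ lt_kl) (sorted1 _ _ lt_kl) lt21.
- have := sorted1 _ _ lt_kl; rewrite eq12 => /lt_trans/(_ (sorted2 _ _ lt_kl)).
  by rewrite ltxx.
Qed.

Lemma exists_between_pair_sums x p q : pair_sum x p < pair_sum x q ->
  exists y : R, [/\ pair_sum x p < 2 * y, 2 * y < pair_sum x q &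
    forall a b, a != b -> pair_sum x (a, b) != 2 * y].
Proof.
move=> lt_pq.
pose lower := [seq pair_sum x r | r <- p :: off_diagonal & pair_sum x r <= pair_sum x p].
pose upper := [seq pair_sum x r | r <- q :: off_diagonal & pair_sum x p < pair_sum x r].
have [|w [lower_w upper_w]] := @exists_separating _ lower upper.
  move=> _ _ /mapP[r + ->] /mapP[r' + ->]; rewrite !mem_filter.
  by move=> /andP[le_r _] /andP[lt_r' _]; apply: le_lt_trans lt_r'.
exists (w / 2); have -> : 2 * (w / 2) = w by lra.
split=> [||a b ne_ab].
- by apply: lower_w; apply: map_f; rewrite mem_filter lexx mem_head.
- by apply: upper_w; apply: map_f; rewrite mem_filter lt_pq mem_head.
have mem_ab : (a, b) \in p :: off_diagonal by rewrite in_cons mem_off_diagonal ne_ab orbT.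
have mem_ab' : (a, b) \in q :: off_diagonal by rewrite in_cons mem_off_diagonal ne_ab orbT.
case: (lerP (pair_sum x (a, b)) (pair_sum x p)) => side.
  by rewrite lt_eqF //; apply: lower_w; apply: map_f; rewrite mem_filter side.
by rewrite gt_eqF //; apply: upper_w; apply: map_f; rewrite mem_filter side.
Qed.

Lemma dist_coord_inj x (y : R) : distinct_sums x ->
  (forall a b, a != b -> pair_sum x (a, b) != 2 * y) ->
  injective (fun i => `|y - coord x i|).
Proof.
move=> dx y_off i j /= eq_ij; apply/eqP; apply: contraT => ne_ij.
wlog lt_ij : i j eq_ij ne_ij / coord x i < coord x j.
  move=> W; case: (ltrgtP (coord x i) (coord x j)) => [lt_ij|lt_ji|/(distinct_sums_inj dx)/eqP].
  - exact: W lt_ij.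
  - by apply: (W j i) => //; rewrite eq_sym.
  - by rewrite (negbTE ne_ij).
rewrite -(negbTE (y_off i j ne_ij)) /pair_sum /=; apply/eqP.
have := dist_ltr_mid y lt_ij; have := dist_gtr_mid y lt_ij; rewrite eq_ij ltxx.
move=> /esym/negbT h1 /esym/negbT h2; rewrite -leNgt in h1; rewrite -leNgt in h2; lra.
Qed.

Lemma exists_pattern_at x (y : R) : injective (fun i => `|y - coord x i|) ->
  exists2 s : 'S_m, s \in ranking_pattern x &
    forall a b, (`|y - coord x a| < `|y - coord x b|) = ((s^-1)%g a < (s^-1)%g b)%N.
Proof.
move=> /exists_sorting_perm[s sorted_s]; exists s; last exact: perm_sorted_ltE.
by apply/ranking_patternP; exists y.
Qed.

(* A common witness s of both patterns, taken at a point y with 2 y strictly between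
   the two sums, transports their comparison from x to x'. *)
Lemma pattern_pair_sum_lt x x' p q : distinct_sums x ->
  ranking_pattern x = ranking_pattern x' ->
  (forall a b, (coord x a < coord x b) = (coord x' a < coord x' b)) ->
  p.1 != p.2 -> q.1 != q.2 -> pair_sum x p < pair_sum x q -> pair_sum x' p < pair_sum x' q.
Proof.
move=> dx E order_eq ne_p ne_q lt_pq.
have [y [lt_py lt_yq y_off]] := exists_between_pair_sums lt_pq.
have [s s_x dist_x] := exists_pattern_at (dist_coord_inj dx y_off).
have /ranking_patternP[y' sorted'] : s \in ranking_pattern x' by rewrite -E.
have dist_eq a b : (`|y - coord x a| < `|y - coord x b|) =
    (`|y' - coord x' a| < `|y' - coord x' b|).
  by rewrite dist_x (perm_sorted_ltE (f := fun i => `|y' - coord x' i|) sorted').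
have side r : r.1 != r.2 -> (pair_sum x r < 2 * y) = (pair_sum x' r < 2 * y').
  case: r => a b /= ne_ab; rewrite /pair_sum /=.
  wlog lt_ab : a b ne_ab / coord x a < coord x b.
    move=> W; case: (ltrgtP (coord x a) (coord x b)) => [lt_ab|lt_ba|/(distinct_sums_inj dx)/eqP].
    - exact: W lt_ab.
    - by rewrite addrC [coord x' a + _]addrC; apply: W; rewrite // eq_sym.
    - by rewrite (negbTE ne_ab).
  have lt_ab' : coord x' a < coord x' b by rewrite -order_eq.
  by rewrite [_ + coord x b]addrC -(dist_gtr_mid y lt_ab) dist_eq dist_gtr_mid // addrC.
have := side p ne_p; rewrite lt_py => /esym lt_py'.
have := side q ne_q; rewrite (lt_gtF lt_yq) => /esym/negbT; rewrite -leNgt => le_yq'.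
exact: lt_le_trans lt_py' le_yq'.
Qed.

Lemma pattern_order_sign_vector x x' : distinct_sums x -> distinct_sums x' ->
  ranking_pattern x = ranking_pattern x' ->
  (forall a b, (coord x a < coord x b) = (coord x' a < coord x' b)) ->
  sign_vector x = sign_vector x'.
Proof.
move=> dx dx' E order_eq; apply/sign_vectorP => -[a b] [c d]; rewrite /same_kind /=.
case: (eqVneq a b) => [<-|ne_ab]; case: (eqVneq c d) => [<-|ne_cd] //= _.
  by rewrite !pair_sum_diag_lt order_eq.
apply/idP/idP; first exact: pattern_pair_sum_lt.
by apply: (pattern_pair_sum_lt dx' (esym E)) => // u v; rewrite order_eq.
Qed.

(* Sorting x' and reversing shows that x is monotone along the sorting permutation of x'. *)
Lemma pattern_sign_vector x x' : distinct_sums x -> distinct_sums x' ->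
  ranking_pattern x = ranking_pattern x' ->
  sign_vector x' = sign_vector x \/ sign_vector x' = sign_vector (- x).
Proof.
move=> dx dx' E.
have [s sorted_s] := exists_sorting_perm (distinct_sums_inj dx').
have s_x : s \in ranking_pattern x by rewrite E sorted_in_pattern.
have rs_x : (rev_perm * s)%g \in ranking_pattern x by rewrite E rev_sorted_in_pattern.
have same_order x0 : sorted_by x0 s ->
    forall a b, (coord x' a < coord x' b) = (coord x0 a < coord x0 b).
  by move=> sorted_x0 a b; rewrite (perm_sorted_ltE sorted_s) (perm_sorted_ltE sorted_x0).
case: (pattern_sorted_or_rev s_x rs_x) => [/same_order|/same_order] order_eq.
  by left; apply: pattern_order_sign_vector.
right; apply: pattern_order_sign_vector => //; first exact: distinct_sumsN.
by rewrite ranking_patternN.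
Qed.

Definition increasing x := forall i j : 'I_m, (i < j)%N -> coord x i < coord x j.

Lemma increasing_ltE x : increasing x -> forall i j, (coord x i < coord x j) = (i < j)%N.
Proof.
move=> inc_x i j; apply/idP/idP => [lt_ij|/inc_x //].
rewrite ltnNge leq_eqVlt; apply/negP => /orP[/eqP/val_inj eq_ji|/inc_x lt_ji].
  by rewrite eq_ji ltxx in lt_ij.
by have := lt_trans lt_ij lt_ji; rewrite ltxx.
Qed.

Definition sign_vectors : {set sign_type} :=
  [set f | `[< exists x, distinct_sums x /\ sign_vector x = f >]].

Lemma sign_vectorsP f :
  reflect (exists x, distinct_sums x /\ sign_vector x = f) (f \in sign_vectors).
Proof. by rewrite inE; apply: asboolP. Qed.

Definition witness (f : sign_type) : 'rV[R]_m :=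
  xget 0 [set x | distinct_sums x /\ sign_vector x = f]%classic.

Lemma witnessP f : f \in sign_vectors ->
  distinct_sums (witness f) /\ sign_vector (witness f) = f.
Proof. by move/sign_vectorsP; apply: xgetPex. Qed.

Definition pattern_of (f : sign_type) := ranking_pattern (witness f).

Lemma pattern_of_sign_vector x : distinct_sums x ->
  pattern_of (sign_vector x) = ranking_pattern x.
Proof.
move=> dx; have [|dw Ew] := @witnessP (sign_vector x); first by apply/sign_vectorsP; exists x.
exact: sign_vector_pattern.
Qed.

Let i0 : 'I_m := Ordinal (leq_trans (isT : (1 <= 3)%N) m_ge3).
Let i1 : 'I_m := Ordinal (leq_trans (isT : (2 <= 3)%N) m_ge3).

Definition first_lt (f : sign_type) := f ((i0, i0), (i1, i1)).

Lemma first_lt_sign_vectorN x : first_lt (sign_vector (- x)) = (coord x i1 < coord x i0).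
Proof. by rewrite /first_lt sign_vectorN ffunE sign_vector_diag. Qed.

(* A pattern determines its sign vector up to x |-> - x, which flips first_lt. *)
Lemma card_pattern_of (B : {set sign_type}) : B \subset sign_vectors ->
  {in B, forall f, first_lt f} -> #|pattern_of @: B| = #|B|.
Proof.
move=> /fintype.subsetP sub_B pos_B; apply: card_in_imset => f g f_B g_B same.
have [df Ef] := witnessP (sub_B f f_B); have [dg Eg] := witnessP (sub_B g g_B).
have := pos_B f f_B; have := pos_B g g_B; rewrite -Ef -Eg.
case: (pattern_sign_vector df dg same) => -> //.
rewrite first_lt_sign_vectorN /first_lt sign_vector_diag => lt10 lt01.
by have := lt_trans lt01 lt10; rewrite ltxx.
Qed.

Definition patterns : {set {set 'S_m}} :=
  [set P | `[< exists x, distinct_sums x /\ ranking_pattern x = P >]].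

Lemma patternsP P :
  reflect (exists x, distinct_sums x /\ ranking_pattern x = P) (P \in patterns).
Proof. by rewrite inE; apply: asboolP. Qed.

Definition pos_sign_vectors : {set sign_type} := [set f in sign_vectors | first_lt f].

Lemma card_pos_sign_vectors : #|pos_sign_vectors| = #|patterns|.
Proof.
have sub : pos_sign_vectors \subset sign_vectors.
  by apply/fintype.subsetP => f; rewrite inE => /andP[].
rewrite -(card_pattern_of sub); last by move=> f; rewrite inE => /andP[].
apply: eq_card => P; apply/imsetP/patternsP => [[f + ->] | [x [dx <-]]].
  by rewrite inE => /andP[/witnessP[dw _] _]; exists (witness f).
case: (ltrgtP (coord x i0) (coord x i1)) => [lt01|lt10|/(distinct_sums_inj dx)/(congr1 val)//].
  exists (sign_vector x); last by rewrite pattern_of_sign_vector.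
  by rewrite inE /first_lt sign_vector_diag lt01 andbT; apply/sign_vectorsP; exists x.
have dxN := distinct_sumsN dx.
exists (sign_vector (- x)); last by rewrite pattern_of_sign_vector // ranking_patternN.
by rewrite inE first_lt_sign_vectorN lt10 andbT; apply/sign_vectorsP; exists (- x).
Qed.

Lemma card_sign_vectors : #|sign_vectors| = (2 * #|patterns|)%N.
Proof.
rewrite -card_pos_sign_vectors -(cardsID pos_sign_vectors sign_vectors).
have -> : sign_vectors :&: pos_sign_vectors = pos_sign_vectors.
  by apply/finset.setIidPr/fintype.subsetP => f; rewrite inE => /andP[].
have -> : sign_vectors :\: pos_sign_vectors = flip_signs @: pos_sign_vectors.
  apply/finset.setP => f; rewrite finset.in_setD; apply/andP/imsetP => [[f_npos f_sv]|[g + ->]].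
    have /sign_vectorsP[x [dx Ex]] := f_sv.
    exists (sign_vector (- x)); last by rewrite sign_vectorN flip_signsK Ex.
    rewrite inE first_lt_sign_vectorN; apply/andP; split.
      by apply/sign_vectorsP; exists (- x); split; first exact: distinct_sumsN.
    move: f_npos; rewrite inE f_sv -Ex /first_lt sign_vector_diag /= -leNgt le_eqVlt.
    by case/orP=> [/eqP/(distinct_sums_inj dx)/(congr1 val)|].
  rewrite inE => /andP[/sign_vectorsP[x [dx <-]]]; rewrite /first_lt sign_vector_diag => lt01.
  rewrite -sign_vectorN inE first_lt_sign_vectorN (lt_gtF lt01) andbF; split=> //.
  by apply/sign_vectorsP; exists (- x); split; first exact: distinct_sumsN.
by rewrite card_imset ?mul2n ?addnn //; exact: can_inj flip_signsK.
Qed.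

Definition sorted_patterns : {set {set 'S_m}} :=
  [set P | `[< exists x, [/\ distinct_sums x, increasing x & ranking_pattern x = P] >]].

Lemma sorted_patternsP P : reflect
  (exists x, [/\ distinct_sums x, increasing x & ranking_pattern x = P]) (P \in sorted_patterns).
Proof. by rewrite inE; apply: asboolP. Qed.

Definition sorted_sign_vectors : {set sign_type} :=
  [set f | `[< exists x, [/\ distinct_sums x, increasing x & sign_vector x = f] >]].

Lemma sorted_sign_vectorsP f : reflect
  (exists x, [/\ distinct_sums x, increasing x & sign_vector x = f]) (f \in sorted_sign_vectors).
Proof. by rewrite inE; apply: asboolP. Qed.

Lemma card_sorted_sign_vectors : #|sorted_sign_vectors| = #|sorted_patterns|.
Proof.
have sub : sorted_sign_vectors \subset sign_vectors.
  by apply/fintype.subsetP => f /sorted_sign_vectorsP[x [dx _ <-]]; apply/sign_vectorsP; exists x.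
rewrite -(card_pattern_of sub); last first.
  by move=> f /sorted_sign_vectorsP[x [_ inc_x <-]]; rewrite /first_lt sign_vector_diag inc_x.
apply: eq_card => P; apply/imsetP/sorted_patternsP.
  by move=> [f /sorted_sign_vectorsP[x [dx inc_x <-]] ->]; exists x; rewrite pattern_of_sign_vector.
move=> [x [dx inc_x <-]]; exists (sign_vector x); last by rewrite pattern_of_sign_vector.
by apply/sorted_sign_vectorsP; exists x.
Qed.

Definition permute_coords (s : 'S_m) x : 'rV[R]_m := \row_i coord x (s i).

Lemma coord_permute s x i : coord (permute_coords s x) i = coord x (s i).
Proof. by rewrite /Defs.coord mxE. Qed.

Lemma permute_coordsK s x : permute_coords (s^-1)%g (permute_coords s x) = x.
Proof. by apply/rowP => i; rewrite mxE coord_permute permKV. Qed.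

Lemma distinct_sums_permute s x : distinct_sums x -> distinct_sums (permute_coords s x).
Proof.
move=> dx a b c d n1 n2 n3 n4; rewrite !coord_permute.
by apply: dx; rewrite ?(inj_eq perm_inj) // !xpair_eqE !(inj_eq perm_inj) -xpair_eqE.
Qed.

Definition permute_signs (s : 'S_m) (f : sign_type) : sign_type :=
  [ffun pq => f ((s pq.1.1, s pq.1.2), (s pq.2.1, s pq.2.2))].

Lemma permute_signsK s : cancel (permute_signs s) (permute_signs (s^-1)%g).
Proof. by move=> f; apply/ffunP => -[[a b] [c d]]; rewrite !ffunE /= !permKV. Qed.

Lemma sign_vector_permute s x :
  sign_vector (permute_coords s x) = permute_signs s (sign_vector x).
Proof.
apply/ffunP => -[[a b] [c d]].
by rewrite !ffunE /same_kind /pair_sum /= !coord_permute !(inj_eq perm_inj).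
Qed.

(* Every sign vector is uniquely a sorted one with its coordinates permuted:
   sorting x gives the permutation, and the diagonal signs recover it. *)
Lemma card_sign_vectors_sorted : #|sign_vectors| = (m`! * #|sorted_sign_vectors|)%N.
Proof.
pose act (sf : 'S_m * sign_type) := permute_signs sf.1 sf.2.
have -> : sign_vectors = act @: finset.setX [set: 'S_m] sorted_sign_vectors.
  apply/finset.setP => f; apply/sign_vectorsP/imsetP => [[x [dx <-]]|].
    have [t sorted_t] := exists_sorting_perm (distinct_sums_inj dx).
    exists ((t^-1)%g, sign_vector (permute_coords t x)); last first.
      by rewrite /act /= -sign_vector_permute permute_coordsK.
    rewrite finset.in_setX finset.in_setT /=; apply/sorted_sign_vectorsP.
    exists (permute_coords t x); split=> // [|i j lt_ij]; first exact: distinct_sums_permute.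
    by rewrite !coord_permute; apply: sorted_t.
  move=> [[s g]]; rewrite finset.in_setX /= => /andP[_ /sorted_sign_vectorsP[x [dx _ <-]]] ->.
  by exists (permute_coords s x); rewrite sign_vector_permute; split; first exact: distinct_sums_permute.
rewrite card_in_imset ?cardsX ?cardsT ?card_Sn // => -[s f] [t g].
rewrite !finset.in_setX /= => /andP[_ /sorted_sign_vectorsP[x [_ inc_x Ef]]].
move=> /andP[_ /sorted_sign_vectorsP[x' [_ inc_x' Eg]]] E.
have eq_st : s = t.
  apply: perm_ltn_inj => a b.
  have := congr1 (fun h : sign_type => h ((a, a), (b, b))) E.
  by rewrite !ffunE /= -Ef -Eg !sign_vector_diag !increasing_ltE.
by move: E; rewrite /act /= -eq_st => /(can_inj (permute_signsK s)) ->.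
Qed.

Lemma r_patterns : r R m = #|patterns|.
Proof.
apply: eq_card => P; apply/idP/idP => [/set_mem/asboolP[x [gx <-]]|/patternsP[x [dx <-]]].
  by apply/patternsP; exists x; split=> //; apply/generic_distinct_sums.
by apply/mem_set/asboolP; exists x; split=> //; apply/generic_distinct_sums.
Qed.

Lemma r0_sorted_patterns : r0 R m = #|sorted_patterns|.
Proof.
apply: eq_card => P; apply/idP/idP.
  move=> /set_mem/asboolP[x [/generic_distinct_sums dx [inc_x <-]]].
  by apply/sorted_patternsP; exists x.
move=> /sorted_patternsP[x [dx inc_x <-]].
by apply/mem_set/asboolP; exists x; split=> //; apply/generic_distinct_sums.
Qed.

Section ChamberCount.
Local Open Scope classical_set_scope.
Local Open Scope card_scope.

Definition chamber_point (C : set 'rV[R]_m) : 'rV[R]_m :=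
  xget 0 [set x | mid_complement R m x /\ C = connected_component (mid_complement R m) x].

Lemma chamber_pointP C : chambers R m C -> mid_complement R m (chamber_point C) /\
  C = connected_component (mid_complement R m) (chamber_point C).
Proof.
case=> x off_x ->; have /(xgetPex 0) : exists y, mid_complement R m y /\
  connected_component (mid_complement R m) x = connected_component (mid_complement R m) y.
  by exists x.
exact.
Qed.

Lemma chamber_sign_vector C : chambers R m C ->
  sign_vector (chamber_point C) \in sign_vectors.
Proof.
by move=> /chamber_pointP[/mid_complementP dC _]; apply/sign_vectorsP; exists (chamber_point C).
Qed.

Lemma chamber_sign_vector_inj C D : chambers R m C -> chambers R m D ->
  sign_vector (chamber_point C) = sign_vector (chamber_point D) -> C = D.
Proof.
move=> /chamber_pointP[/mid_complementP dC eC] /chamber_pointP[_ eD] E.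
by rewrite eC eD; apply/same_connected_component/sign_vector_connected.
Qed.

Lemma chamber_sign_vector_surj f : f \in sign_vectors ->
  exists2 C, chambers R m C & sign_vector (chamber_point C) = f.
Proof.
move=> /sign_vectorsP[x [dx <-]]; set C := connected_component (mid_complement R m) x.
have C_ch : chambers R m C by exists x => //; apply/mid_complementP.
exists C => //; apply/esym/connected_sign_vector => //.
have [off_C E] := chamber_pointP C_ch.
suff : C (chamber_point C) by [].
by rewrite {1}E; exact: connected_component_refl.
Qed.

Lemma card_chambers : chambers R m #= `I_#|sign_vectors|.
Proof.
pose idx C := index (sign_vector (chamber_point C)) (enum sign_vectors).
apply/card_set_bijP; exists idx; split.
- by move=> C /chamber_sign_vector; rewrite /= cardE index_mem mem_enum.
- move=> C D /set_mem C_ch /set_mem D_ch /(congr1 (nth (sign_vector 0) (enum sign_vectors))).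
  rewrite !nth_index ?mem_enum ?chamber_sign_vector //.
  exact: chamber_sign_vector_inj.
- move=> k /= lt_k; have f_sv : nth (sign_vector 0) (enum sign_vectors) k \in sign_vectors.
    by rewrite -mem_enum mem_nth // -cardE.
  have [C C_ch E] := chamber_sign_vector_surj f_sv.
  by exists C => //; rewrite /idx E index_uniq ?enum_uniq // -cardE.
Qed.

End ChamberCount.

End MidArrangement.

Local Open Scope classical_set_scope.
Local Open Scope card_scope.

Theorem theorem3p2 (R : realType) (m : nat) (hm : (3 <= m)%N) :
  r R m = ((m`! %/ 2) * r0 R m)%N /\ chambers R m #= `I_(2 * r R m).
Proof.
have halves := card_sign_vectors R hm; have perms := card_sign_vectors_sorted R hm.
rewrite (r_patterns R m) (r0_sorted_patterns R m) -(card_sorted_sign_vectors R hm).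
split; last by rewrite -halves; exact: card_chambers.
have two_dvd : (2 %| m`!)%N by apply: dvdn_fact; rewrite /= (leq_trans _ hm).
move: halves perms; rewrite -(divnK two_dvd); nia.
Qed.
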